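(* Let $\mathbf{x}_1,\ldots,\mathbf{x}_n\in\mathbb{R}^p$, let $\|\cdot\|$ be an arbitrary norm on $\mathbb{R}^p$, and let $w_{ij}\ge 0$ ($1\le i<j\le n$) be weights. Consider the graph on vertex set $\{1,\dots,n\}$ with an edge between $i$ and $j$ whenever $w_{ij}>0$, and suppose this graph is connected. Let $\bar{\mathbf{x}}=\frac1n\sum_{i=1}^n\mathbf{x}_i$ and let $\bar{\mathbf{X}}\in\mathbb{R}^{p\times n}$ be the matrix each of whose columns equals $\bar{\mathbf{x}}$. Then there exists $\gamma_0\ge 0$ such that for all $\gamma\ge\gamma_0$, $\bar{\mathbf{X}}$ minimizes $$F_\gamma(\mathbf{U})=\frac12\sum_{i=1}^n\|\mathbf{x}_i-\mathbf{u}_i\|_2^2+\gamma\sum_{i<j}w_{ij}\|\mathbf{u}_i-\mathbf{u}_j\|.$$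
   Context: $\mathbf{U}=(\mathbf{u}_1,\ldots,\mathbf{u}_n)\in\mathbb{R}^{p\times n}$ with $\mathbf{u}_i$ its $i$th column. *)

From mathcomp Require Import ssreflect ssrbool ssrnat eqtype fintype.
From Stdlib Require Import Reals Relations.
Open Scope R_scope.

Definition vec (p : nat) := 'I_p -> R.

Definition sumI {n : nat} (f : 'I_n -> R) : R :=
  List.fold_right Rplus 0 (List.map f (enum 'I_n)).

Definition vsub {p} (u v : vec p) : vec p := fun k => u k - v k.
Definition vscale {p} (a : R) (u : vec p) : vec p := fun k => a * u k.
Definition vadd {p} (u v : vec p) : vec p := fun k => u k + v k.

Definition sqnorm2 {p} (u : vec p) : R := sumI (fun k => u k * u k).

Definition is_norm {p} (nrm : vec p -> R) : Prop :=
  (forall u, nrm u = 0 -> forall k, u k = 0) /\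
  (forall a u, nrm (vscale a u) = Rabs a * nrm u) /\
  (forall u v, nrm (vadd u v) <= nrm u + nrm v).

(* weight graph: edge {i,j} iff w_ij > 0, weights used only for i < j *)
Definition wedge {n} (w : 'I_n -> 'I_n -> R) (i j : 'I_n) : Prop :=
  (ltn i j /\ 0 < w i j) \/ (ltn j i /\ 0 < w j i).

Definition connected_w {n} (w : 'I_n -> 'I_n -> R) : Prop :=
  forall i j : 'I_n, clos_refl_trans 'I_n (wedge w) i j.

Definition mean {n p} (x : 'I_n -> vec p) : vec p :=
  fun k => / INR n * sumI (fun i => x i k).

Definition Fgamma {n p} (nrm : vec p -> R) (x : 'I_n -> vec p)
  (w : 'I_n -> 'I_n -> R) (gamma : R) (U : 'I_n -> vec p) : R :=
  / 2 * sumI (fun i => sqnorm2 (vsub (x i) (U i)))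
  + gamma * sumI (fun i => sumI (fun j =>
        if ltn i j then w i j * nrm (vsub (U i) (U j)) else 0)).

From Stdlib Require Import Reals Relations.
From mathcomp Require Import all_boot all_order all_algebra.
From mathcomp Require Import boolp classical_sets reals topology normedtype derive.
From mathcomp Require Import Rstruct.
From mathcomp Require Import ring lra.

(* Write a_i = x_i - mean x, so that sum_i a_i = 0.  Completing the square,
     |x_i - u_i|^2 >= |a_i|^2 + 2 <a_i, mean x - u_i>,
   and since the a_i sum to zero, mean x may be replaced by u_r for a fixed
   vertex r.  Each term <a_i, u_r - u_i> is at most |a_i|_1 max_k |u_rk - u_ik|,
   which (finite-dimensional norm equivalence) is at most c |a_i|_1 ||u_r - u_i||,
   and (connectedness) ||u_r - u_i|| <= L_i * penalty(U), the bound being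
   propagated edge by edge along a walk from r to i.  Hence the fidelity term
   drops below its value at the centroid by at most G * penalty(U), and for
   gamma >= G the constant configuration mean x, whose penalty is zero, is a
   minimiser. *)

Set Implicit Arguments.
Unset Strict Implicit.
Unset Printing Implicit Defensive.

Import Order.TTheory GRing.Theory Num.Theory Num.Def numFieldNormedType.Exports.
Local Open Scope classical_set_scope.
Local Open Scope ring_scope.

Lemma mx_coord_le_norm (K : realDomainType) (m n : nat) (M : 'M[K]_(m, n)) i j :
  `|M i j| <= `|M|.
Proof.
rewrite [leRHS]/normr /= mx_normrE; apply/bigmax_geP; right => /=.
by exists (i, j).
Qed.

Section NormDominatesMaxNorm.
Variables (R : realType) (q : nat) (N : 'rV[R]_q -> R).
Hypothesis N_eq0 : forall x, N x = 0 -> x = 0.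
Hypothesis NZ : forall a x, N (a *: x) = `|a| * N x.
Hypothesis ND : forall x y, N (x + y) <= N x + N y.

Lemma N0 : N 0 = 0.
Proof. by rewrite -(scale0r 0) NZ normr0 mul0r. Qed.

Lemma N_ge0 x : 0 <= N x.
Proof.
have := ND x (- x); rewrite subrr N0 -scaleN1r NZ normrN1 mul1r.
by rewrite -mulr2n pmulrn_lge0.
Qed.

Lemma N_opp x : N (- x) = N x.
Proof. by rewrite -scaleN1r NZ normrN1 mul1r. Qed.

Lemma N_dist x y : `|N x - N y| <= N (x - y).
Proof.
have := ND (x - y) y; have := ND (y - x) x.
rewrite !subrK -[y - x]opprB N_opp ler_norml => h1 h2.
by apply/andP; split; lra.
Qed.

(* Expanding x in the standard basis: N is dominated by the max-norm. *)
Lemma N_le_maxnorm x : N x <= (\sum_j N (delta_mx 0 j)) * `|x|.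
Proof.
rewrite {1}[x]row_sum_delta mulr_suml.
elim/big_ind2 : _ => [|s1 t1 s2 t2 h1 h2|j _]; first by rewrite N0.
  exact: le_trans (ND t1 t2) (lerD h1 h2).
by rewrite NZ mulrC ler_wpM2l ?N_ge0 ?mx_coord_le_norm.
Qed.

(* Consequently N is Lipschitz, hence continuous, for the max-norm topology. *)
Lemma N_continuous : continuous N.
Proof.
move=> x; apply/(@cvgrPdist_lt _ _ _ (nbhs x) (nbhs_filter x)) => e e0.
pose B := \sum_j N (delta_mx 0 j) + 1.
have B0 : 0 < B by rewrite ltr_wpDl ?sumr_ge0 // => j _; exact: N_ge0.
near=> y.
apply: le_lt_trans (N_dist x y) _; apply: le_lt_trans (N_le_maxnorm _) _.
apply: le_lt_trans (_ : B * `|x - y| < e).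
  by rewrite ler_wpM2r // lerDl.
rewrite -ltr_pdivlMl // mulrC; near: y.
exact: (@cvgr_dist_lt _ _ _ (nbhs x) (nbhs_filter x) id x cvg_id _ (divr_gt0 e0 B0)).
Unshelve. all: by end_near.
Qed.

(* N is bounded below by a positive constant on the unit sphere of the
   max-norm: a continuous function attains its minimum on a compact set. *)
Lemma N_sphere_lower_bound :
  exists m, 0 < m /\ forall x, `|x| = 1 -> m <= N x.
Proof.
pose S := [set x : 'rV[R]_q | `|x| = 1].
have [S0|/set0P S0] := eqVneq S set0.
  by exists 1; split => // x x1; have : S x by []; rewrite S0.
have cS : compact S.
  apply: bounded_closed_compact.
    by exists 1; split => // M M1 x /= ->; exact: ltW.
  apply: (@preimage_closed _ R^o (fun x : 'rV[R]_q => `|x|) [set 1]) => [? _|].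
    exact: norm_continuous.
  exact: closed_eq.
have [c Sc cmin] := EVT_min_rV S0 cS (continuous_subspaceT N_continuous).
exists (N c); split => [|x x1]; last by apply: cmin; rewrite in_setE.
rewrite lt_def N_ge0 andbT; apply: contraTneq Sc => /N_eq0 ->.
by rewrite notin_setE /S /= normr0 => /esym/eqP; rewrite oner_eq0.
Qed.

Theorem maxnorm_le_N : exists c, 0 < c /\ forall x, `|x| <= c * N x.
Proof.
have [m [m_gt0 sphere_bound]] := N_sphere_lower_bound.
exists m^-1; split => [|x]; first by rewrite invr_gt0.
have [->|x0] := eqVneq x 0; first by rewrite N0 normr0 mulr0.
have xpos : 0 < `|x| by rewrite normr_gt0.
have := sphere_bound (`|x|^-1 *: x).
rewrite NZ normrZ normfV normr_id mulVf ?gt_eqF // => /(_ erefl).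
by rewrite mulrC ler_pdivlMr // ler_pdivlMl // mulrC.
Qed.

End NormDominatesMaxNorm.

Section VecNorm.
Variables (p : nat) (nrm : vec p -> R).
Hypothesis nrm_norm : is_norm nrm.

Let N (u : 'rV[R]_p) : R := nrm (fun k => u 0 k).

Let nrmE (v : vec p) : nrm v = N (\row_k v k).
Proof. by rewrite /N; congr nrm; apply: funext => k; rewrite mxE. Qed.

Let row_vsub (u v : vec p) : \row_k vsub u v k = \row_k u k - \row_k v k.
Proof. by apply/matrixP => i k; rewrite !mxE. Qed.

Let N_eq0 u : N u = 0 -> u = 0.
Proof.
case: nrm_norm => nrm_eq0 _ /nrm_eq0 u0.
by apply/matrixP => i k; rewrite ord1 mxE; exact: u0.
Qed.

Let NZ a u : N (a *: u) = `|a| * N u.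
Proof.
case: nrm_norm => _ [nrmZ _]; rewrite /N -[RHS]nrmZ; congr nrm.
by apply: funext => k; rewrite /vscale mxE.
Qed.

Let ND u v : N (u + v) <= N u + N v.
Proof.
case: nrm_norm => _ [_ nrmD]; rewrite /N.
have -> : (fun k => (u + v) 0 k) = vadd (fun k => u 0 k) (fun k => v 0 k).
  by apply: funext => k; rewrite mxE.
exact/RleP/nrmD.
Qed.

Lemma nrm_ge0 v : 0 <= nrm v.
Proof. by rewrite nrmE (N_ge0 NZ ND). Qed.

Lemma nrm_vsub_self u : nrm (vsub u u) = 0.
Proof. by rewrite nrmE row_vsub subrr (N0 NZ). Qed.

Lemma nrm_vsubC u v : nrm (vsub u v) = nrm (vsub v u).
Proof. by rewrite !nrmE !row_vsub -opprB (N_opp NZ). Qed.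

Lemma nrm_vsub_triangle u v t : nrm (vsub u t) <= nrm (vsub u v) + nrm (vsub v t).
Proof.
rewrite !nrmE !row_vsub.
by have := ND (\row_k u k - \row_k v k) (\row_k v k - \row_k t k); rewrite addrA subrK.
Qed.

Lemma coord_le_nrm : exists c, 0 <= c /\ forall v k, `|v k| <= c * nrm v.
Proof.
have [c [c_gt0 Hc]] := maxnorm_le_N N_eq0 NZ ND.
exists c; split => [|v k]; first exact: ltW.
rewrite nrmE; apply: le_trans (Hc _).
by have := mx_coord_le_norm (\row_k v k) 0 k; rewrite mxE.
Qed.

End VecNorm.

Lemma walk_bound (K : realFieldType) (T A : Type) (E : T -> T -> Prop)
    (d : A -> T -> T -> K) (P : A -> K) :
  (forall a, 0 <= P a) -> (forall a i, d a i i = 0) ->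
  (forall a i j k, d a i k <= d a i j + d a j k) ->
  (forall i j, E i j -> exists L, 0 <= L /\ forall a, d a i j <= L * P a) ->
  forall i j, clos_refl_trans T E i j ->
  exists L, 0 <= L /\ forall a, d a i j <= L * P a.
Proof.
move=> P_ge0 d_refl d_tri edge i j.
elim=> {i j} [i j /edge //|i|i j k _ [L1 [L1_ge0 H1]] _ [L2 [L2_ge0 H2]]].
  by exists 0; split => // a; rewrite d_refl mul0r.
exists (L1 + L2); split => [|a]; first by rewrite addr_ge0.
by rewrite mulrDl; apply: le_trans (d_tri a i j k) (lerD (H1 a) (H2 a)).
Qed.

Lemma sumIE (n : nat) (f : 'I_n -> R) : sumI f = \sum_(i < n) f i.
Proof. by rewrite -big_enum -(big_map f xpredT id) -foldrE. Qed.

Lemma meanE (n p : nat) (x : 'I_n -> vec p) k :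
  mean x k = n%:R^-1 * \sum_(i < n) x i k.
Proof. by rewrite /mean sumIE INRE. Qed.

Lemma sq_dist_lower (K : realDomainType) (I : finType) (y m u : I -> K) :
  \sum_k (y k - m k) ^+ 2 + 2 * \sum_k (y k - m k) * (m k - u k)
  <= \sum_k (y k - u k) ^+ 2.
Proof.
rewrite mulr_sumr -big_split /=; apply: ler_sum => k _.
rewrite -subr_ge0.
have -> : (y k - u k) ^+ 2 - ((y k - m k) ^+ 2 + 2 * ((y k - m k) * (m k - u k)))
  = (m k - u k) ^+ 2 by ring.
exact: sqr_ge0.
Qed.

Lemma linear_form_le (K : realDomainType) (I : finType) (a v : I -> K) M :
  (forall k, `|v k| <= M) -> - \sum_k a k * v k <= (\sum_k `|a k|) * M.
Proof.
move=> vM; rewrite -sumrN mulr_suml; apply: ler_sum => k _.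
apply: le_trans (ler_norm _) _; rewrite normrN normrM.
by apply: ler_wpM2l => //; exact: normr_ge0.
Qed.

Section Penalty.
Variables (n p : nat) (nrm : vec p -> R) (w : 'I_n -> 'I_n -> R).
Hypothesis nrm_norm : is_norm nrm.
Hypothesis w_ge0 : forall i j : 'I_n, (i < j)%N -> 0 <= w i j.

Definition penalty (U : 'I_n -> vec p) : R :=
  \sum_(i < n) \sum_(j < n)
    (if (i < j)%N then w i j * nrm (vsub (U i) (U j)) else 0).

Lemma penalty_term_ge0 U (i j : 'I_n) :
  0 <= (if (i < j)%N then w i j * nrm (vsub (U i) (U j)) else 0).
Proof. by case: ifP => // /w_ge0 wij; rewrite mulr_ge0 ?(nrm_ge0 nrm_norm). Qed.

Lemma penalty_ge0 U : 0 <= penalty U.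
Proof.
by apply: sumr_ge0 => i _; apply: sumr_ge0 => j _; exact: penalty_term_ge0.
Qed.

Lemma edge_le_penalty U (i j : 'I_n) :
  (i < j)%N -> w i j * nrm (vsub (U i) (U j)) <= penalty U.
Proof.
move=> ij; rewrite /penalty (bigD1 i) //= (bigD1 j) //= ij -addrA lerDl.
rewrite addr_ge0 ?sumr_ge0 // => k _; first exact: penalty_term_ge0.
by apply: sumr_ge0 => l _; exact: penalty_term_ge0.
Qed.

Lemma edge_diff_bound U (i j : 'I_n) :
  (i < j)%N -> 0 < w i j -> nrm (vsub (U i) (U j)) <= (w i j)^-1 * penalty U.
Proof. by move=> ij wij; rewrite ler_pdivlMl // edge_le_penalty. Qed.

Lemma connected_diff_bound : connected_w w -> forall i j,
  exists L, 0 <= L /\ forall U, nrm (vsub (U i) (U j)) <= L * penalty U.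
Proof.
move=> conn i j.
apply: (@walk_bound _ _ _ (wedge w) (fun U k l => nrm (vsub (U k) (U l))) _ penalty_ge0);
  last exact: conn.
- by move=> U k; rewrite (nrm_vsub_self nrm_norm).
- by move=> U k l m; exact: (nrm_vsub_triangle nrm_norm).
move=> k l [[kl /RltP wkl]|[lk /RltP wlk]].
  exists (w k l)^-1; split; first by rewrite invr_ge0 ltW.
  by move=> U; exact: edge_diff_bound.
exists (w l k)^-1; split; first by rewrite invr_ge0 ltW.
by move=> U; rewrite (nrm_vsubC nrm_norm); exact: edge_diff_bound.
Qed.

End Penalty.

Section FidelityDeficit.
Variables (n p : nat) (x : 'I_n -> vec p) (nrm : vec p -> R) (w : 'I_n -> 'I_n -> R).
Hypothesis nrm_norm : is_norm nrm.
Hypothesis w_ge0 : forall i j : 'I_n, (i < j)%N -> 0 <= w i j.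
Hypothesis n_gt0 : (0 < n)%N.

Lemma sum_dev k : \sum_(i < n) (x i k - mean x k) = 0.
Proof.
rewrite sumrB sumr_const card_ord meanE -[X in _ - X]mulr_natl mulrA mulfV.
  by rewrite mul1r subrr.
by rewrite pnatr_eq0 -lt0n.
Qed.

Lemma dev_pairing_shift (m v : vec p) (U : 'I_n -> vec p) :
  \sum_(i < n) \sum_(k < p) (x i k - mean x k) * (m k - U i k)
  = \sum_(i < n) \sum_(k < p) (x i k - mean x k) * (v k - U i k).
Proof.
transitivity (\sum_(i < n) \sum_(k < p)
  ((x i k - mean x k) * (v k - U i k) + (m k - v k) * (x i k - mean x k))).
  by apply: eq_bigr => i _; apply: eq_bigr => k _; ring.
under eq_bigr do rewrite big_split /=.
rewrite big_split /= [X in _ + X]exchange_big /= [X in _ + X]big1 ?addr0 //.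
by move=> k _; rewrite -mulr_sumr sum_dev mulr0.
Qed.

Lemma fidelity_deficit : connected_w w -> exists G, 0 <= G /\ forall U,
  2^-1 * \sum_(i < n) \sum_(k < p) (x i k - mean x k) ^+ 2
  <= 2^-1 * \sum_(i < n) \sum_(k < p) (x i k - U i k) ^+ 2 + G * penalty nrm w U.
Proof.
move=> conn; pose r := Ordinal n_gt0.
have [c [c_ge0 coord]] := coord_le_nrm nrm_norm.
have [L L_bound] := fin_all_exists (connected_diff_bound nrm_norm w_ge0 conn r).
pose G := \sum_(i < n) (\sum_(k < p) `|x i k - mean x k|) * (c * L i).
exists G; split=> [|U].
  apply: sumr_ge0 => i _; have [L_ge0 _] := L_bound i.
  by rewrite mulr_ge0 ?mulr_ge0 // sumr_ge0.
have cross : - \sum_(i < n) \sum_(k < p) (x i k - mean x k) * (mean x k - U i k)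
    <= G * penalty nrm w U.
  rewrite (dev_pairing_shift _ (U r)) -sumrN /G mulr_suml; apply: ler_sum => i _.
  rewrite -!mulrA; apply: linear_form_le => k.
  apply: le_trans (coord (vsub (U r) (U i)) k) _.
  by apply: ler_wpM2l => //; case: (L_bound i) => _ ->.
have quad : \sum_(i < n) \sum_(k < p) (x i k - mean x k) ^+ 2
    + 2 * \sum_(i < n) \sum_(k < p) (x i k - mean x k) * (mean x k - U i k)
    <= \sum_(i < n) \sum_(k < p) (x i k - U i k) ^+ 2.
  by rewrite mulr_sumr -big_split; apply: ler_sum => i _; exact: sq_dist_lower.
lra.
Qed.

End FidelityDeficit.

Lemma FgammaE (n p : nat) (nrm : vec p -> R) (x : 'I_n -> vec p)
    (w : 'I_n -> 'I_n -> R) gamma (U : 'I_n -> vec p) :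
  Fgamma nrm x w gamma U
  = 2^-1 * \sum_(i < n) \sum_(k < p) (x i k - U i k) ^+ 2 + gamma * penalty nrm w U.
Proof.
rewrite /Fgamma /penalty !sumIE.
under eq_bigr do rewrite /sqnorm2 sumIE.
by under [X in Rmult gamma X]eq_bigr do rewrite sumIE.
Qed.

Lemma penalty_const (n p : nat) (nrm : vec p -> R) (w : 'I_n -> 'I_n -> R) u :
  is_norm nrm -> penalty nrm w (fun _ => u) = 0.
Proof.
move=> nrm_norm; apply: big1 => i _; apply: big1 => j _.
by rewrite (nrm_vsub_self nrm_norm) mulr0; case: ifP.
Qed.

Open Scope R_scope.

Theorem proposition2 (n p : nat) (x : 'I_n -> vec p) (nrm : vec p -> R)
  (w : 'I_n -> 'I_n -> R) :
  is_norm nrm ->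
  (forall i j : 'I_n, ltn i j -> 0 <= w i j) ->
  connected_w w ->
  exists gamma0 : R, 0 <= gamma0 /\
    forall gamma : R, gamma0 <= gamma ->
      forall U : 'I_n -> vec p,
        Fgamma nrm x w gamma (fun _ => mean x) <= Fgamma nrm x w gamma U.
Proof.
move=> nrm_norm w_ge0 conn.
have w_nonneg : forall i j : 'I_n, (i < j)%N -> (0 <= w i j)%R by move=> i j /w_ge0/RleP.
have [n0|n_gt0] := posnP n.
  subst n; exists 0; split => [|gamma _ U]; first exact: Rle_refl.
  by apply/RleP; rewrite !FgammaE /penalty !big_ord0.
have [G [G_ge0 deficit]] := fidelity_deficit x nrm_norm w_nonneg n_gt0 conn.
exists G; split => [|gamma /RleP G_le U]; first exact/RleP.
apply/RleP; rewrite !FgammaE penalty_const // mulr0 addr0.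
have := ler_wpM2r (penalty_ge0 nrm_norm w_nonneg U) G_le.
have := deficit U; lra.
Qed.
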